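(* Let $n\in\{2,3,4\}$ and let $(d_1,\dots,d_n)$ be an unordered sequence of $n$ positive integers. (1) For $n=2$: $(d_1,d_2)$ is a regular degree sequence if and only if it is permissible, if and only if it satisfies condition $( * )$. (2) For $n=3$: $(d_1,d_2,d_3)$ is a regular degree sequence if and only if it is permissible. (3) For $n=4$: every permissible degree sequence $(d_1,d_2,d_3,d_4)$ is a regular degree sequence, except the sequences $(1,2,5,12\delta)$, $(2,2,5,12\delta)$ and $(5,2,5,12\delta)$ with $\delta$ a positive integer, which are not regular degree sequences.
   Context: Let $R=\mathbb{C}[x_1,\dots,x_n]$ with the standard grading and let the symmetric group $\mathfrak{S}_n$ act by permuting the variables; $R^{\mathfrak{S}_n}=\mathbb{C}[e_1,\dots,e_n]$, where $e_i$ is the $i$-th elementary symmetric polynomial. A sequence of $n$ homogeneous polynomials in $R$ is a (maximal) regular sequence iff its only common zero in $\mathbb{C}^n$ is the origin. An unordered sequence $(d_1,\dots,d_n)$ of positive integers is a regular degree sequence if there exists a homogeneous regular sequence $f_1,\dots,f_n$ in $R$ with every $f_i\in R^{\mathfrak{S}_n}$ and $\deg f_i=d_i$. Condition $( * )$: for every $i=1,\dots,n$, $\beta_i:=\#\{1\le j\le n: i\mid d_j\}\ge\lfloor n/i\rfloor$. Condition $(\dagger)$: for every $i=1,\dots,n$, $\#\{j: d_j\le i\}\le i$. The sequence is permissible if it satisfies both $( * )$ and $(\dagger)$. *)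

From HB Require Import structures.
From mathcomp Require Import all_boot all_order all_algebra.
From mathcomp Require Import Rstruct.
From mathcomp Require Import complex.
From mathcomp Require Import mpoly.
Set Implicit Arguments. Unset Strict Implicit. Unset Printing Implicit Defensive.
Import Order.TTheory GRing.Theory Num.Theory.

Definition CC : Type := complex Rdefinitions.R.

Definition cond_star (n : nat) (d : seq nat) : Prop :=
  forall i : nat, 1 <= i <= n -> n %/ i <= count (fun x => i %| x) d.

Definition cond_dagger (n : nat) (d : seq nat) : Prop :=
  forall i : nat, 1 <= i <= n -> count (fun x => x <= i) d <= i.

Definition permissible (n : nat) (d : seq nat) : Prop :=
  cond_star n d /\ cond_dagger n d.

(* (d_1,...,d_n) is a regular degree sequence: there are homogeneous
   symmetric polynomials f_1,...,f_n in C[x_1,...,x_n], deg f_j = d_j,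
   forming a regular sequence, i.e. whose only common zero in C^n is 0. *)
Definition regular_degree_seq (n : nat) (d : seq nat) : Prop :=
  exists f : 'I_n -> {mpoly CC[n]},
    (forall j : 'I_n, f j \is symmetric) /\
    (forall j : 'I_n, f j != 0%R /\ f j \is (nth 0%N d j).-homog) /\
    (forall x : 'I_n -> CC, (forall j : 'I_n, (f j).@[x] = 0%R) -> forall k, x k = 0%R).

Definition exceptional4 (d : seq nat) : Prop :=
  exists delta : nat, 0 < delta /\
    (perm_eq d [:: 1; 2; 5; 12 * delta] \/
     perm_eq d [:: 2; 2; 5; 12 * delta] \/
     perm_eq d [:: 5; 2; 5; 12 * delta]).

From mathcomp Require Import all_boot all_algebra perm mpoly zify.
From mathcomp Require Import Rstruct complex.
Set Implicit Arguments. Unset Strict Implicit. Unset Printing Implicit Defensive.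
Import GRing.Theory Num.Theory.

(* Every symmetric polynomial is a polynomial in e_1, ..., e_n, and the map
   x |-> (e_1(x), ..., e_n(x)) is onto C^n with only 0 mapping to 0. So d is a
   regular degree sequence iff there are polynomials f_1, ..., f_n in variables
   y_1, ..., y_n of weights 1, ..., n, with f_j weighted homogeneous of degree
   d_j, whose only common zero is 0.
   Necessity: if k divides no d_j, all f_j vanish at the unit vector of y_k; if
   all d_j but one are outside the semigroup generated by the weights a and b,
   all f_j but one vanish on the (y_a, y_b)-plane, where the last one, being
   weighted homogeneous of positive degree, has a nonzero root. For n <= 3 this
   yields permissibility, and for n = 4 the plane (y_3, y_4) rules out
   (x, 2, 5, e) with x in {1, 2, 5}.
   Sufficiency: explicit triangular systems of monomials and binomials cover all
   the other permissible sequences. Which system applies depends only on the d_j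
   modulo 12 and on the d_j below 6, so the case analysis is a finite computation
   over degrees at most 17. *)

Local Open Scope ring_scope.

Section ElementarySymmetricValues.
Variables (R : idomainType) (n : nat).

Definition esyms : n.-tuple {mpoly R[n]} := [tuple mesym n R i.+1 | i < n].

Definition esym_values (x : 'I_n -> R) : 'I_n -> R := fun i => (mesym n R i.+1).@[x].

Lemma meval_comp_esyms (t : {mpoly R[n]}) x : (t \mPo esyms).@[x] = t.@[esym_values x].
Proof. by rewrite comp_mpoly_meval; apply: meval_eq => i; rewrite tnth_mktuple. Qed.

Lemma meval_eq0_supp (t : {mpoly R[n]}) v :
  (forall m, m \in msupp t -> exists2 i, (0 < m i)%N & v i = 0) -> t.@[v] = 0.
Proof.
move=> vanish; rewrite mevalE big_seq big1 // => m /vanish [i m_i v_i].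
by rewrite (bigD1 i) //= v_i expr0n gtn_eqF // !mul0r mulr0.
Qed.

Lemma esym_values0 i : esym_values (fun _ => 0) i = 0.
Proof.
apply: meval_eq0_supp => m /(dhomog_mf (dhomog_mesym n R i.+1)) mdeg_m.
case: (pickP (fun j => 0 < m j)%N) => [j m_j | m0]; first by exists j.
by move: mdeg_m => /=; rewrite mdegE big1 // => j _; apply/eqP; rewrite -leqn0 leqNgt m0.
Qed.

(* Vieta: the values e_k(x) are, up to sign, the coefficients of prod_i (X - x_i),
   so when they all vanish this polynomial is X^n. *)
Lemma esym_values_eq0 x : (forall i, esym_values x i = 0) -> forall k, x k = 0.
Proof.
move=> e_x0 i0; pose xs := [tuple x i | i < n].
pose P := \prod_(c <- xs) ('X - c%:P).
have size_P : size P = n.+1 by rewrite size_prod_XsubC size_tuple.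
have P_Xn : P = 'X^n.
  apply/polyP => i; rewrite coefXn; case: (ltngtP i n) => [lt_in|lt_ni|->].
  - have [k lt_kn ->] : exists2 k, (k < n)%N & i = (n - k.+1)%N.
      by exists (n - i.+1)%N; lia.
    rewrite (mroots_coeff xs (Ordinal (lt_kn : k.+1 < n.+1)%N)).
    have -> : (mesym n R k.+1).@[tnth xs] = esym_values x (Ordinal lt_kn).
      by apply: meval_eq => j; rewrite tnth_mktuple.
    by rewrite e_x0 mulr0.
  - by rewrite nth_default // size_P.
  - by have := monicP (monic_prod_XsubC xs predT id); rewrite /lead_coef -/P size_P.
have : root P (x i0).
  by rewrite root_prod_XsubC; apply/tnthP; exists i0; rewrite tnth_mktuple.
by rewrite P_Xn rootE hornerXn expf_eq0 => /andP [_ /eqP].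
Qed.

End ElementarySymmetricValues.

(* Given c, the roots of X^n - c_1 X^(n-1) + ... + (-1)^n c_n have e_k = c_k. *)
Lemma esym_values_surj (C : closedFieldType) n (c : 'I_n -> C) :
  exists x, forall i, esym_values x i = c i.
Proof.
pose cn k := if insub k is Some i then c i else 0.
have cnE (i : 'I_n) : cn i = c i by rewrite /cn valK.
pose P := \poly_(j < n.+1) (if (n - j)%N is k.+1 then (-1) ^+ k.+1 * cn k else 1).
have size_P : size P = n.+1 by rewrite size_poly_eq //= subnn oner_eq0.
have [r P_r] := closed_field_poly_normal P.
rewrite /lead_coef size_P coef_poly ltnSn subnn scale1r in P_r.
have size_r : size r == n by rewrite -eqSS -size_P P_r size_prod_XsubC.
exists (tnth (Tuple size_r)) => i.
have lt_i1n : (i.+1 < n.+1)%N by rewrite ltnS.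
have := mroots_coeff (Tuple size_r) (Ordinal lt_i1n).
rewrite /= -P_r coef_poly (_ : n - i.+1 < n.+1)%N; last by lia.
rewrite (_ : n - (n - i.+1) = i.+1)%N; last by have := ltn_ord i; lia.
by rewrite cnE => /(mulfI (negbT (signr_eq0 _ _))) ->.
Qed.

Section WeightedHomogeneous.
Variables (R : comNzRingType) (n : nat).
Implicit Types (t : {mpoly R[n]}) (v : 'I_n -> R).

Lemma meval_wscale t D v mu : t \is D.-homog for mnmwgt ->
  t.@[fun i => mu ^+ i.+1 * v i] = mu ^+ D * t.@[v].
Proof.
move=> /dhomogP t_homog; rewrite !mevalE mulr_sumr big_seq [RHS]big_seq.
apply: eq_bigr => m m_t; rewrite mulrCA; congr (_ * _).
under eq_bigr do rewrite exprMn -exprM.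
rewrite big_split /= prodrXr; congr (_ ^+ _ * _).
by rewrite -(t_homog m m_t) /mnmwgt; apply: eq_bigr => i _; rewrite mulnC.
Qed.

Definition mpoly_line t v (a : 'I_n) : {poly R} :=
  \sum_(m <- msupp t) (t@_m * \prod_(i | i != a) v i ^+ m i) *: 'X^(m a).

Lemma horner_mpoly_line t v a z :
  (mpoly_line t v a).[z] = t.@[fun i => if i == a then z else v i].
Proof.
rewrite /mpoly_line horner_sum mevalE; apply: eq_bigr => m _.
rewrite hornerZ hornerXn [X in _ = _ * X](bigD1 a) //= eqxx -mulrA; congr (_ * _).
by rewrite mulrC; congr (_ * _); apply: eq_bigr => i /negbTE ->.
Qed.

Definition coord2 (a b : 'I_n) (u w : R) : 'I_n -> R :=
  fun i => if i == a then u else if i == b then w else 0.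

End WeightedHomogeneous.

(* If both restrictions z |-> t(z e_a + e_b) and z |-> t(e_a + z e_b) were
   nonzero constants g and h, then g = h (at z = 1), while weighted homogeneity
   gives t(2^(a+1) e_a + e_b) = 2^D t(e_a + 2^-(b+1) e_b), i.e. g = 2^D h. *)
Lemma wdhomog_coord2_root (C : numClosedFieldType) n (t : {mpoly C[n]}) D (a b : 'I_n) :
  a != b -> (0 < D)%N -> t \is D.-homog for mnmwgt ->
  exists u w, (u != 0) || (w != 0) /\ t.@[coord2 a b u w] = 0.
Proof.
move=> neq_ab D_gt0 t_homog.
pose G := mpoly_line t (coord2 a b 0 1) a; pose H := mpoly_line t (coord2 a b 1 0) b.
have GE z : G.[z] = t.@[coord2 a b z 1].
  by rewrite horner_mpoly_line; apply: meval_eq => i; rewrite /coord2; case: eqP.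
have HE z : H.[z] = t.@[coord2 a b 1 z].
  rewrite horner_mpoly_line; apply: meval_eq => i; rewrite /coord2.
  by case: eqP => [->|_]; [rewrite eq_sym (negbTE neq_ab) | case: eqP].
have [/eqP/size_poly1P [g _ G_g] | /closed_rootP [z /rootP G_z]] := eqVneq (size G) 1%N;
  last by exists z, 1; rewrite oner_neq0 orbT -GE.
have [/eqP/size_poly1P [h h_neq0 H_h] | /closed_rootP [z /rootP H_z]] := eqVneq (size H) 1%N;
  last by exists 1, z; rewrite oner_neq0 -HE.
have two_neq0 : 2 != 0 :> C by rewrite pnatr_eq0.
have g_h : g = h by have := GE 1; rewrite -HE G_g H_h !hornerC.
have : G.[2 ^+ a.+1] = 2 ^+ D * H.[(2 ^+ b.+1)^-1].
  rewrite GE HE -meval_wscale //; apply: meval_eq => i; rewrite /coord2.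
  case: eqP => [->|_]; first by rewrite mulr1.
  case: eqP => [->|_]; last by rewrite mulr0.
  by rewrite mulfV // expf_eq0 negb_and two_neq0 orbT.
rewrite G_g H_h !hornerC g_h -{1}[h]mul1r => /(mulIf h_neq0) /eqP.
rewrite -natrX eq_sym pnatr_eq1 => /eqP two_D_1.
by have := ltn_exp2l 0 D (isT : 1 < 2)%N; rewrite expn0 two_D_1 D_gt0.
Qed.

Section RegularDegreeSequences.
Variable n : nat.
Implicit Types (d : seq nat) (t : 'I_n -> {mpoly CC[n]}).

Lemma regular_of_weighted d t :
  (forall j, t j \is (nth 0%N d j).-homog for mnmwgt) ->
  (forall j, exists v, (t j).@[v] != 0) ->
  (forall v, (forall j, (t j).@[v] = 0) -> forall i, v i = 0) ->
  regular_degree_seq n d.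
Proof.
move=> t_homog t_neq0 t_reg; exists (fun j => t j \mPo esyms CC n); split; [|split].
- move=> j; apply: mcomp_sym => i.
  by rewrite -(tnth_nth 0) tnth_mktuple mesym_sym.
- move=> j; split; last by rewrite -mwmwgt_homogE.
  have [v tv_neq0] := t_neq0 j; have [x x_v] := esym_values_surj v.
  by apply: contraNneq tv_neq0 => tS0; rewrite -(meval_eq _ x_v) -meval_comp_esyms tS0 meval0.
- move=> x tS_x0; apply: esym_values_eq0; apply: t_reg => j.
  by rewrite -meval_comp_esyms.
Qed.

Lemma weighted_of_regular d : regular_degree_seq n d ->
  exists t, (forall j, t j \is (nth 0%N d j).-homog for mnmwgt) /\
            (forall v, (forall j, (t j).@[v] = 0) -> forall i, v i = 0).
Proof.
case=> f [f_sym [f_homog f_reg]].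
have t_spec j := sym_fundamental_homog (f_sym j) (proj2 (f_homog j)).
exists (fun j => sval (t_spec j)); split=> [j | v t_v0 i].
  by case: (t_spec j) => t [].
have [x x_v] := esym_values_surj v.
have x0 : forall k, x k = 0.
  apply: f_reg => j; have := t_v0 j; case: (t_spec j) => t [t_f _] /=.
  by rewrite -t_f meval_comp_esyms (meval_eq _ x_v).
by rewrite -x_v -(esym_values0 _ i); apply: meval_eq.
Qed.

Lemma regular_degree_seq_perm d d' : perm_eq d d' -> size d = n ->
  regular_degree_seq n d -> regular_degree_seq n d'.
Proof.
rewrite perm_sym => d'd /eqP size_d; move/(tuple_permP (t := Tuple size_d)): d'd.
move=> [p d'_p] [f [f_sym [f_homog f_reg]]].
have nth_d' (j : 'I_n) : nth 0%N d' j = nth 0%N d (p j).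
  by rewrite d'_p -tnth_nth tnth_mktuple (tnth_nth 0%N).
exists (fun j => f (p j)); split=> [j | ]; first exact: f_sym.
split=> [j | x f_x0]; first by rewrite nth_d'; exact: f_homog.
by apply: f_reg => j; have := f_x0 (p^-1 j)%g; rewrite permKV.
Qed.

End RegularDegreeSequences.

Lemma mnmwgt_supp n (m : 'X_{1..n}) (S : {pred 'I_n}) :
  (forall i, i \notin S -> m i = 0%N) -> mnmwgt m = (\sum_(i in S) m i * i.+1)%N.
Proof.
move=> m_S; rewrite /mnmwgt (bigID (mem S)) /= addnC big1 // => i /m_S ->.
by rewrite mul0n.
Qed.

Lemma wdhomog_meval_eq0 (R : idomainType) n (t : {mpoly R[n]}) D (S : {pred 'I_n}) v :
  t \is D.-homog for mnmwgt -> (forall i, i \notin S -> v i = 0) ->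
  (forall m : 'X_{1..n}, (forall i, i \notin S -> m i = 0%N) -> mnmwgt m != D) ->
  t.@[v] = 0.
Proof.
move=> /dhomogP t_homog v_S no_wgt; apply: meval_eq0_supp => m m_t.
case: (pickP (fun i => (0 < m i)%N && (i \notin S))) => [i /andP [m_i i_S] | m_S].
  by exists i; last exact: v_S.
have m_supp i : i \notin S -> m i = 0%N.
  by move=> i_S; apply/eqP; rewrite -leqn0 leqNgt; have /= := m_S i; rewrite i_S andbT => ->.
by have := no_wgt m m_supp; rewrite t_homog ?eqxx.
Qed.

(* A weighted homogeneous polynomial whose degree is not a multiple of k
   vanishes at the unit vector of the variable of weight k. *)
Lemma regular_has_dvdn n d k : size d = n -> (0 < k <= n)%N ->
  regular_degree_seq n d -> has (dvdn k) d.
Proof.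
move=> size_d /andP [k_gt0 k_le_n] /weighted_of_regular [t [t_homog t_reg]].
have lt_kn : (k.-1 < n)%N by rewrite prednK.
pose k' := Ordinal lt_kn; pose v i : CC := (i == k')%:R.
apply/negPn/negP => /hasPn no_dvd.
suff : v k' = 0 by rewrite /v eqxx => /eqP; rewrite pnatr_eq0.
apply: t_reg => j; apply: (wdhomog_meval_eq0 (S := pred1 k') (t_homog j)).
  by move=> i; rewrite inE /v => /negbTE ->.
move=> m m_k; rewrite (mnmwgt_supp m_k) big_pred1_eq /= prednK //.
have d_j : nth 0%N d j \in d by rewrite mem_nth // size_d.
by apply: contraNneq (no_dvd _ d_j) => <-; apply: dvdn_mull.
Qed.

Lemma not_regular_coord2 n d (a b j0 : 'I_n) : a != b -> (0 < nth 0%N d j0)%N ->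
  (forall j, j != j0 -> forall p q, nth 0%N d j != p * a.+1 + q * b.+1)%N ->
  ~ regular_degree_seq n d.
Proof.
move=> neq_ab d_j0 no_wgt /weighted_of_regular [t [t_homog t_reg]].
have [u [w [uw_neq0 t_uw]]] := wdhomog_coord2_root neq_ab d_j0 (t_homog j0).
have /t_reg coord2_0 : forall j, (t j).@[coord2 a b u w] = 0.
  move=> j; have [-> // | neq_jj0] := eqVneq j j0.
  apply: (wdhomog_meval_eq0 (S := [pred i | (i == a) || (i == b)]) (t_homog j)).
    by move=> i /norP [/negbTE i_a /negbTE i_b]; rewrite /coord2 i_a i_b.
  move=> m m_ab; rewrite (mnmwgt_supp m_ab) (bigD1 a) ?inE ?eqxx //= (big_pred1 b).
    by rewrite eq_sym; apply: no_wgt.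
  by move=> i /=; rewrite inE; case: eqP => [->|_] /=; rewrite ?andbT ?(negbTE neq_ab).
move: uw_neq0; have := coord2_0 a; have := coord2_0 b.
by rewrite /coord2 eqxx eq_sym (negbTE neq_ab) eqxx => -> ->; rewrite eqxx.
Qed.

Section BinomialZeros.
Variable R : idomainType.
Implicit Types x y : R.

Lemma addXX_eq0 x y p q : (0 < p)%N -> (0 < q)%N -> x ^+ p + y ^+ q = 0 ->
  (x == 0) = (y == 0).
Proof.
move=> p_gt0 q_gt0 xy0; apply/eqP/eqP => [x0 | y0]; apply/eqP.
  by move: xy0; rewrite x0 expr0n gtn_eqF // add0r => /eqP; rewrite expf_eq0 q_gt0.
by move: xy0; rewrite y0 expr0n (gtn_eqF q_gt0) addr0 => /eqP; rewrite expf_eq0 p_gt0.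
Qed.

Lemma monomial_binomial_eq0 x y u v p q : (0 < p)%N -> (0 < q)%N ->
  x ^+ u * y ^+ v = 0 -> x ^+ p + y ^+ q = 0 -> x = 0 /\ y = 0.
Proof.
move=> p_gt0 q_gt0 /eqP; rewrite mulf_eq0 !expf_eq0 => xy0 /(addXX_eq0 p_gt0 q_gt0) xy.
suff : (x == 0) && (y == 0) by case/andP => /eqP -> /eqP ->.
by rewrite -xy andbb; case/orP: xy0 => /andP [_]; rewrite ?xy.
Qed.

End BinomialZeros.

Lemma wdhomog_Xn (R : comNzRingType) n (i : 'I_n) k D : D = (i.+1 * k)%N ->
  ('X_i : {mpoly R[n]}) ^+ k \is D.-homog for mnmwgt.
Proof. by move=> ->; apply: dhomogMn; rewrite dhomogX; apply/eqP; apply: mnmwgt1. Qed.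

Lemma wdhomog_XnM (R : comNzRingType) n (i j : 'I_n) u v D :
  D = (i.+1 * u + j.+1 * v)%N ->
  ('X_i : {mpoly R[n]}) ^+ u * 'X_j ^+ v \is D.-homog for mnmwgt.
Proof. by move=> ->; apply: dhomogM; apply: wdhomog_Xn. Qed.

Lemma regular_monomial n d : (forall j : 'I_n, 0 < nth 0%N d j /\ j.+1 %| nth 0%N d j)%N ->
  regular_degree_seq n d.
Proof.
move=> d_ok; apply: (regular_of_weighted (t := fun j => 'X_j ^+ (nth 0%N d j %/ j.+1))).
- by move=> j; apply: wdhomog_Xn; rewrite mulnC divnK //; case: (d_ok j).
- by move=> j; exists (fun _ => 1); rewrite rmorphXn /= mevalXU expr1n oner_neq0.
- move=> v v0 i; have := v0 i; rewrite rmorphXn /= mevalXU => /eqP.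
  by rewrite expf_eq0 => /andP [_ /eqP].
Qed.

Section ThreeVariables.
Local Notation o k := (@Ordinal 3 k isT).
Local Notation X k := ('X_(o k) : {mpoly CC[3]}).

Lemma regular3_odd a u c : (0 < a)%N -> (0 < c)%N -> (6 %| c)%N ->
  regular_degree_seq 3 [:: a; 2 * u + 3; c]%N.
Proof.
move=> a_gt0 c_gt0 c6; have [c2_gt0 c3_gt0] : (0 < c %/ 2 /\ 0 < c %/ 3)%N by lia.
apply: (regular_of_weighted (t := fun j => nth 0
  [:: X 0 ^+ a; X 1 ^+ u * X 2 ^+ 1; X 1 ^+ (c %/ 2) + X 2 ^+ (c %/ 3)] j)).
- case=> -[|[|[|k]]] //= _.
  + by apply: wdhomog_Xn => /=; lia.
  + by apply: wdhomog_XnM => /=; lia.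
  + by apply: dhomogD; apply: wdhomog_Xn => /=; lia.
- by case=> -[|[|[|k]]] //= _; exists (fun _ => 1);
    rewrite ?mevalD ?mevalM !rmorphXn /= !mevalXU !expr1n ?mulr1 -?mulr2n ?pnatr_eq0 ?oner_neq0.
- move=> v v0; have [[h0 h1] h2] := (v0 (o 0), v0 (o 1), v0 (o 2)).
  rewrite /= ?mevalD ?mevalM !rmorphXn /= !mevalXU in h0 h1 h2.
  have [v1 v2] := monomial_binomial_eq0 c2_gt0 c3_gt0 h1 h2.
  move/eqP: h0; rewrite expf_eq0 => /andP [_ /eqP v0'].
  by case=> -[|[|[|k]]] lt_k3 //; rewrite (bool_irrelevance lt_k3 isT).
Qed.

Lemma not_regular3_ones d (j0 : 'I_3) : (0 < nth 0 d j0)%N ->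
  (forall j, j != j0 -> nth 0 d j = 1)%N -> ~ regular_degree_seq 3 d.
Proof.
move=> d_j0 d_1; apply: (not_regular_coord2 (a := o 1) (b := o 2) (j0 := j0)) => //.
by move=> j /d_1 -> p q /=; lia.
Qed.

End ThreeVariables.

Section FourVariables.
Local Notation o k := (@Ordinal 4 k isT).
Local Notation X k := ('X_(o k) : {mpoly CC[4]}).

Lemma regular4_even a b x y e : (0 < a)%N -> (0 < b)%N -> (2 %| b)%N -> (0 < x + y)%N ->
  (0 < e)%N -> (12 %| e)%N -> regular_degree_seq 4 [:: a; b; 3 * x + 4 * y; e]%N.
Proof.
move=> a_gt0 b_gt0 b2 xy_gt0 e_gt0 e12.
have [e3_gt0 e4_gt0] : (0 < e %/ 3 /\ 0 < e %/ 4)%N by lia.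
apply: (regular_of_weighted (t := fun j => nth 0
  [:: X 0 ^+ a; X 1 ^+ (b %/ 2); X 2 ^+ x * X 3 ^+ y; X 2 ^+ (e %/ 3) + X 3 ^+ (e %/ 4)] j)).
- case=> -[|[|[|[|k]]]] //= _.
  + by apply: wdhomog_Xn => /=; lia.
  + by apply: wdhomog_Xn => /=; lia.
  + by apply: wdhomog_XnM => /=; lia.
  + by apply: dhomogD; apply: wdhomog_Xn => /=; lia.
- by case=> -[|[|[|[|k]]]] //= _; exists (fun _ => 1);
    rewrite ?mevalD ?mevalM !rmorphXn /= !mevalXU !expr1n ?mulr1 -?mulr2n ?pnatr_eq0 ?oner_neq0.
- move=> v v0; have [[[h0 h1] h2] h3] := (v0 (o 0), v0 (o 1), v0 (o 2), v0 (o 3)).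
  rewrite /= ?mevalD ?mevalM !rmorphXn /= !mevalXU in h0 h1 h2 h3.
  have [v2 v3] := monomial_binomial_eq0 e3_gt0 e4_gt0 h2 h3.
  move/eqP: h0; rewrite expf_eq0 => /andP [_ /eqP v0'].
  move/eqP: h1; rewrite expf_eq0 => /andP [_ /eqP v1].
  by case=> -[|[|[|[|k]]]] lt_k4 //; rewrite (bool_irrelevance lt_k4 isT).
Qed.

Lemma regular4_odd_even a u x y e : (0 < a)%N -> (0 < x + y)%N -> (2 %| 3 * x + 4 * y)%N ->
  (0 < e)%N -> (12 %| e)%N -> regular_degree_seq 4 [:: a; 2 * u + 3; 3 * x + 4 * y; e]%N.
Proof.
move=> a_gt0 xy_gt0 c2 e_gt0 e12; set c := (3 * x + 4 * y)%N.
have [c2_gt0 [e3_gt0 e4_gt0]] : (0 < c %/ 2 /\ 0 < e %/ 3 /\ 0 < e %/ 4)%N by lia.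
apply: (regular_of_weighted (t := fun j => nth 0
  [:: X 0 ^+ a; X 1 ^+ u * X 2 ^+ 1; X 1 ^+ (c %/ 2) + X 2 ^+ x * X 3 ^+ y;
      X 2 ^+ (e %/ 3) + X 3 ^+ (e %/ 4)] j)).
- case=> -[|[|[|[|k]]]] //= _.
  + by apply: wdhomog_Xn => /=; lia.
  + by apply: wdhomog_XnM => /=; lia.
  + by apply: dhomogD; [apply: wdhomog_Xn | apply: wdhomog_XnM] => /=; lia.
  + by apply: dhomogD; apply: wdhomog_Xn => /=; lia.
- by case=> -[|[|[|[|k]]]] //= _; exists (fun _ => 1);
    rewrite ?mevalD ?mevalM !rmorphXn /= !mevalXU !expr1n ?mulr1 -?mulr2n ?pnatr_eq0 ?oner_neq0.
- move=> v v0; have [[[h0 h1] h2] h3] := (v0 (o 0), v0 (o 1), v0 (o 2), v0 (o 3)).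
  rewrite /= ?mevalD ?mevalM !rmorphXn /= !mevalXU in h0 h1 h2 h3.
  have [v1 [v2 v3]] : v (o 1) = 0 /\ v (o 2) = 0 /\ v (o 3) = 0.
    move/eqP: (h1); rewrite mulf_eq0 !expf_eq0 => /orP [] /andP [_ /eqP vi].
      move: h2; rewrite vi expr0n gtn_eqF // add0r => h2.
      by have [v2 v3] := monomial_binomial_eq0 e3_gt0 e4_gt0 h2 h3.
    have v3 : v (o 3) = 0 by apply/eqP; rewrite -(addXX_eq0 e3_gt0 e4_gt0 h3) vi.
    move: h2; rewrite vi v3 -exprD expr0n gtn_eqF // addr0 => /eqP.
    by rewrite expf_eq0 => /andP [_ /eqP].
  move/eqP: h0; rewrite expf_eq0 => /andP [_ /eqP v0'].
  by case=> -[|[|[|[|k]]]] lt_k4 //; rewrite (bool_irrelevance lt_k4 isT).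
Qed.

Lemma regular4_odd a u c e : (0 < a)%N -> (0 < c)%N -> (6 %| c)%N ->
  (0 < e)%N -> (4 %| e)%N -> regular_degree_seq 4 [:: a; 2 * u + 3; c; e]%N.
Proof.
move=> a_gt0 c_gt0 c6 e_gt0 e4.
have [c2_gt0 [c3_gt0 e4_gt0]] : (0 < c %/ 2 /\ 0 < c %/ 3 /\ 0 < e %/ 4)%N by lia.
apply: (regular_of_weighted (t := fun j => nth 0
  [:: X 0 ^+ a; X 1 ^+ u * X 2 ^+ 1; X 1 ^+ (c %/ 2) + X 2 ^+ (c %/ 3); X 3 ^+ (e %/ 4)] j)).
- case=> -[|[|[|[|k]]]] //= _.
  + by apply: wdhomog_Xn => /=; lia.
  + by apply: wdhomog_XnM => /=; lia.
  + by apply: dhomogD; apply: wdhomog_Xn => /=; lia.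
  + by apply: wdhomog_Xn => /=; lia.
- by case=> -[|[|[|[|k]]]] //= _; exists (fun _ => 1);
    rewrite ?mevalD ?mevalM !rmorphXn /= !mevalXU !expr1n ?mulr1 -?mulr2n ?pnatr_eq0 ?oner_neq0.
- move=> v v0; have [[[h0 h1] h2] h3] := (v0 (o 0), v0 (o 1), v0 (o 2), v0 (o 3)).
  rewrite /= ?mevalD ?mevalM !rmorphXn /= !mevalXU in h0 h1 h2 h3.
  have [v1 v2] := monomial_binomial_eq0 c2_gt0 c3_gt0 h1 h2.
  move/eqP: h0; rewrite expf_eq0 => /andP [_ /eqP v0'].
  move/eqP: h3; rewrite expf_eq0 => /andP [_ /eqP v3].
  by case=> -[|[|[|[|k]]]] lt_k4 //; rewrite (bool_irrelevance lt_k4 isT).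
Qed.

Lemma not_regular4_exceptional x e : x \in [:: 1; 2; 5]%N -> (0 < e)%N ->
  ~ regular_degree_seq 4 [:: x; 2; 5; e]%N.
Proof.
move=> x125 e_gt0; apply: (not_regular_coord2 (a := o 2) (b := o 3) (j0 := o 3)) => //.
case=> -[|[|[|[|k]]]] //= lt_k4 _ p q; move: x125; rewrite !inE; lia.
Qed.

End FourVariables.

Local Close Scope ring_scope.

(* A representative of x modulo 12 in [6, 18), or x itself when x < 6: it keeps
   divisibility by the divisors of 12 and comparisons with numbers below 6, which
   is all that permissibility for n <= 4 and the families below depend on. *)
Definition red12 (x : nat) : nat := if x < 6 then x else 6 + (x - 6) %% 12.

Lemma red12_mod x : red12 x = x %[mod 12].
Proof. by rewrite /red12; case: ifP => // /negbT; rewrite -leqNgt modnDmr => /subnKC ->. Qed.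

Lemma dvdn_red12 k x : k %| 12 -> (k %| red12 x) = (k %| x).
Proof. by move=> k12; rewrite /dvdn -(modn_dvdm x k12) -(modn_dvdm (red12 x) k12) red12_mod. Qed.

Lemma red12_leq x c : c < 6 -> (red12 x <= c) = (x <= c).
Proof. rewrite /red12; case: ifP => //; lia. Qed.

Lemma leq_red12 c x : c <= 6 -> (c <= red12 x) = (c <= x).
Proof. rewrite /red12; case: ifP => //; lia. Qed.

Lemma red12_eq x c : c < 6 -> (red12 x == c) = (x == c).
Proof. rewrite /red12; case: ifP => //; lia. Qed.

Lemma red12_range x : 0 < x -> 1 <= red12 x <= 17.
Proof. rewrite /red12; case: ifP => //; lia. Qed.

Fixpoint nondecr_seqs (k lo hi : nat) : seq (seq nat) :=
  if k is k'.+1 then [seq x :: s | x <- iota lo (hi.+1 - lo), s <- nondecr_seqs k' x hi]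
  else [:: [::]].

Lemma mem_nondecr_seqs lo hi s :
  sorted leq s -> all (fun x => lo <= x <= hi) s -> s \in nondecr_seqs (size s) lo hi.
Proof.
elim: s lo => [|x s IHs] lo //= sorted_xs /andP [/andP [lo_x x_hi] s_range].
have x_le_s : all (leq x) s := order_path_min leq_trans sorted_xs.
apply: (allpairs_f_dep (fun x s => x :: s)); first by rewrite mem_iota; lia.
apply: IHs; first exact: path_sorted sorted_xs.
by apply/allP => y ys; rewrite (allP x_le_s) //= (andP (allP s_range y ys)).2.
Qed.

Lemma perm_eq_mapP (T1 T2 : eqType) (f : T1 -> T2) (r : seq T2) (s : seq T1) :
  reflect (exists2 s', perm_eq s' s & r = map f s') (perm_eq r (map f s)).
Proof.
apply: (iffP idP) => [| [s' s's ->]]; last exact: perm_map.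
case: s => [|x0 s]; first by move/perm_nilP ->; exists [::].
case/(perm_iotaP (f x0)) => I I_iota ->; exists (map (nth x0 (x0 :: s)) I).
  by apply/(perm_iotaP x0); exists I; rewrite // -(size_map f).
rewrite -map_comp; apply/eq_in_map => i; rewrite (perm_mem I_iota) mem_iota size_map.
by move=> lt_i; rewrite (nth_map x0).
Qed.

Definition starb n d := all (fun i => n %/ i <= count (fun x => i %| x) d) (iota 1 n).
Definition daggerb n d := all (fun i => count (fun x => x <= i) d <= i) (iota 1 n).

Lemma cond_starP n d : reflect (cond_star n d) (starb n d).
Proof.
by apply: (iffP allP) => star i i_range; apply: star; move: i_range; rewrite mem_iota; lia.
Qed.

Lemma cond_daggerP n d : reflect (cond_dagger n d) (daggerb n d).
Proof.
by apply: (iffP allP) => dagger i i_range; apply: dagger; move: i_range; rewrite mem_iota; lia.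
Qed.

Lemma starb_red12 n d : n <= 4 -> starb n (map red12 d) = starb n d.
Proof.
move=> n_le4; apply: eq_in_all => i; rewrite mem_iota count_map => i_range.
have i12 : i %| 12 by move: i_range; case: i => [|[|[|[|[|i]]]]] //; lia.
by congr (_ <= _); apply: eq_count => x /=; rewrite dvdn_red12.
Qed.

Lemma daggerb_red12 n d : n <= 5 -> daggerb n (map red12 d) = daggerb n d.
Proof.
move=> n_le5; apply: eq_in_all => i; rewrite mem_iota count_map => i_range.
by congr (_ <= _); apply: eq_count => x /=; rewrite red12_leq //; lia.
Qed.

Lemma reduce_degrees (P : pred (seq nat)) n d :
  (forall s t, perm_eq s t -> P s = P t) -> all P (nondecr_seqs n 1 17) ->
  size d = n -> all (fun x => 0 < x) d -> P (map red12 d).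
Proof.
move=> P_perm P_small size_d d_gt0; set r := map red12 d.
have r_sort : perm_eq (sort leq r) r := permEl (perm_sort leq r).
rewrite -(P_perm _ _ r_sort); apply: (allP P_small).
rewrite -size_d -(size_map red12 d) -(perm_size r_sort).
apply: mem_nondecr_seqs; first exact: (path.sort_sorted leq_total).
by rewrite (perm_all _ r_sort) all_map; apply/allP => x /(allP d_gt0) /red12_range.
Qed.

Lemma starb_perm n s t : perm_eq s t -> starb n s = starb n t.
Proof. by move=> st; apply: eq_all => i; rewrite (seq.permP st). Qed.

Lemma daggerb_perm n s t : perm_eq s t -> daggerb n s = daggerb n t.
Proof. by move=> st; apply: eq_all => i; rewrite (seq.permP st). Qed.

Lemma covered_family (hyp family : pred (seq nat)) n d :
  (forall s t, perm_eq s t -> hyp s = hyp t) -> (forall s, hyp (map red12 s) = hyp s) ->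
  all (fun r => hyp r ==> has family (permutations r)) (nondecr_seqs n 1 17) ->
  size d = n -> all (fun x => 0 < x) d -> hyp d ->
  exists2 d', perm_eq d' d & family (map red12 d').
Proof.
move=> hyp_perm hyp_red12 small size_d d_gt0 hyp_d.
have P_perm s t : perm_eq s t ->
    (hyp s ==> has family (permutations s)) = (hyp t ==> has family (permutations t)).
  by move=> st; rewrite (hyp_perm _ _ st) (perm_has _ (perm_permutations st)).
move: (reduce_degrees P_perm small size_d d_gt0); rewrite hyp_red12 hyp_d /=.
by case/hasP => r; rewrite mem_permutations => /perm_eq_mapP [d' d'd ->]; exists d'.
Qed.

Definition family2 (l : seq nat) := if l is [:: _; b] then 2 %| b else false.

Definition family3 (l : seq nat) :=
  if l is [:: _; b; c] then (2 %| b) && (3 %| c) || [&& ~~ (2 %| b), 3 <= b & 6 %| c]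
  else false.

(* The clauses are the hypotheses of regular_monomial, regular4_even,
   regular4_odd_even and regular4_odd. *)
Definition family4 (l : seq nat) :=
  if l is [:: _; b; c; e] then
    [|| [&& 2 %| b, 3 %| c & 4 %| e], [&& 2 %| b, 3 <= c, c != 5 & 12 %| e],
        [&& ~~ (2 %| b), 3 <= b, 2 %| c, 4 <= c & 12 %| e]
      | [&& ~~ (2 %| b), 3 <= b, 6 %| c & 4 %| e]]
  else false.

Definition exceptional12 (l : seq nat) :=
  l \in [:: [:: 1; 2; 5; 12]; [:: 2; 2; 5; 12]; [:: 5; 2; 5; 12]].

Lemma family2_red12 l : family2 (map red12 l) = family2 l.
Proof. by case: l => [|a [|b [|]]] //=; rewrite dvdn_red12. Qed.

Lemma family3_red12 l : family3 (map red12 l) = family3 l.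
Proof. by case: l => [|a [|b [|c [|]]]] //=; rewrite !dvdn_red12 ?leq_red12. Qed.

Lemma family4_red12 l : family4 (map red12 l) = family4 l.
Proof.
by case: l => [|a [|b [|c [|e [|]]]]] //=; rewrite !dvdn_red12 ?leq_red12 ?red12_eq.
Qed.

Lemma sum34_exists c : 3 <= c -> c != 5 -> exists x y, c = 3 * x + 4 * y /\ 0 < x + y.
Proof.
move=> c_ge3 c_neq5; have : c %% 3 < 3 by rewrite ltn_mod.
case: (c %% 3) (divn_eq c 3) => [|[|[|//]]] c_div _.
- by exists (c %/ 3), 0; lia.
- by exists ((c - 4) %/ 3), 1; lia.
- by exists ((c - 8) %/ 3), 2; lia.
Qed.

Lemma regular_family2 l : all (fun x => 0 < x) l -> family2 l -> regular_degree_seq 2 l.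
Proof.
case: l => [|a [|b [|]]] //= /and3P [a_gt0 b_gt0 _] b2.
by apply: regular_monomial; case=> -[|[|k]] //= _; rewrite ?dvd1n.
Qed.

Lemma regular_family3 l : all (fun x => 0 < x) l -> family3 l -> regular_degree_seq 3 l.
Proof.
case: l => [|a [|b [|c [|]]]] //= /and4P [a_gt0 b_gt0 c_gt0 _].
case/orP => [/andP [b2 c3] | /and3P [b_odd b_ge3 c6]].
  by apply: regular_monomial; case=> -[|[|[|k]]] //= _; rewrite ?dvd1n.
by rewrite (_ : b = 2 * ((b - 3) %/ 2) + 3); [apply: regular3_odd | lia].
Qed.

Lemma regular_family4 l : all (fun x => 0 < x) l -> family4 l -> regular_degree_seq 4 l.
Proof.
case: l => [|a [|b [|c [|e [|]]]]] //= /and5P [a_gt0 b_gt0 c_gt0 e_gt0 _].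
have b_odd : ~~ (2 %| b) -> 3 <= b -> b = 2 * ((b - 3) %/ 2) + 3 by lia.
case/or4P => [/and3P [b2 c3 e4] | /and4P [b2 c_ge3 c_neq5 e12] |
              /and5P [b2 b_ge3 c2 c_ge4 e12] | /and4P [b2 b_ge3 c6 e4]].
- by apply: regular_monomial; case=> -[|[|[|[|k]]]] //= _; rewrite ?dvd1n.
- by have [x [y [-> xy_gt0]]] := sum34_exists c_ge3 c_neq5; apply: regular4_even.
- have [x [y [c_xy xy_gt0]]] : exists x y, c = 3 * x + 4 * y /\ 0 < x + y.
    by apply: sum34_exists; lia.
  by rewrite (b_odd b2 b_ge3) c_xy; apply: regular4_odd_even; rewrite -?c_xy.
- by rewrite (b_odd b2 b_ge3); apply: regular4_odd.
Qed.

Definition permissibleb n d := starb n d && daggerb n d.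

Lemma permissibleP n d : reflect (permissible n d) (permissibleb n d).
Proof.
by apply: (iffP andP) => -[/cond_starP star /cond_daggerP dagger].
Qed.

Lemma permissibleb_perm n s t : perm_eq s t -> permissibleb n s = permissibleb n t.
Proof. by move=> st; rewrite /permissibleb (starb_perm n st) (daggerb_perm n st). Qed.

Lemma permissibleb_red12 n d : n <= 4 -> permissibleb n (map red12 d) = permissibleb n d.
Proof. by move=> n_le4; rewrite /permissibleb starb_red12 ?daggerb_red12 //; lia. Qed.

Lemma small_star2 :
  all (fun r => starb 2 r ==> has (fun l => daggerb 2 l && family2 l) (permutations r))
      (nondecr_seqs 2 1 17).
Proof. by vm_compute. Qed.

Lemma small_permissible3 :
  all (fun r => permissibleb 3 r ==> has family3 (permutations r)) (nondecr_seqs 3 1 17).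
Proof. by vm_compute. Qed.

Lemma small_permissible4 :
  all (fun r => permissibleb 4 r ==> has (predU exceptional12 family4) (permutations r))
      (nondecr_seqs 4 1 17).
Proof. by vm_compute. Qed.

Lemma regular_star n d : n <= 3 -> size d = n -> regular_degree_seq n d -> cond_star n d.
Proof.
move=> n_le3 size_d reg i /andP [i_gt0 i_le_n]; have [-> | i_neq1] := eqVneq i 1.
  by rewrite divn1 (eq_count dvd1n) count_predT size_d.
have n_i : n %/ i <= 1 by rewrite -ltnS ltn_divLR //; lia.
by rewrite (leq_trans n_i) // -has_count (regular_has_dvdn size_d _ reg) ?i_gt0.
Qed.

Lemma regular3_dagger d : size d = 3 -> all (fun x => 0 < x) d ->
  regular_degree_seq 3 d -> cond_dagger 3 d.
Proof.
case: d => [|a [|b [|c [|]]]] // size_d /and4P [a_gt0 b_gt0 c_gt0 _] reg i.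
have [ones | few_ones] := leqP 2 (count (fun x => x <= 1) [:: a; b; c]).
  have : a = 1 /\ b = 1 \/ a = 1 /\ c = 1 \/ b = 1 /\ c = 1 by move: ones => /=; lia.
  case=> [[a1 b1] | [[a1 c1] | [b1 c1]]]; exfalso; move: reg; subst.
  - by apply: (not_regular3_ones (j0 := @Ordinal 3 2 isT)) => //= -[[|[|[|k]]] lt_k3].
  - by apply: (not_regular3_ones (j0 := @Ordinal 3 1 isT)) => //= -[[|[|[|k]]] lt_k3].
  - by apply: (not_regular3_ones (j0 := @Ordinal 3 0 isT)) => //= -[[|[|[|k]]] lt_k3].
have [small | few_small] := leqP 3 (count (fun x => x <= 2) [:: a; b; c]).
  have /= := regular_has_dvdn (k := 3) size_d isT reg; move: small => /=; lia.
move=> /andP [i_gt0 i_le3]; move: few_ones few_small => /=.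
have : i = 1 \/ i = 2 \/ i = 3 by lia.
by case=> [|[|]] -> /=; lia.
Qed.

Lemma regular_of_covered n (family : pred (seq nat)) d d' : perm_eq d' d ->
  all (fun x => 0 < x) d -> size d = n ->
  (forall l, all (fun x => 0 < x) l -> family l -> regular_degree_seq n l) ->
  family d' -> regular_degree_seq n d.
Proof.
move=> d'd d_gt0 size_d family_regular fam'.
have size_d' : size d' = n by rewrite (perm_size d'd).
apply: (regular_degree_seq_perm d'd size_d').
by apply: family_regular fam'; rewrite (perm_all _ d'd).
Qed.

Lemma regular2P d : size d = 2 -> all (fun x => 0 < x) d ->
  (regular_degree_seq 2 d <-> permissible 2 d) /\ (permissible 2 d <-> cond_star 2 d).
Proof.
move=> size_d d_gt0.
have star_regular : cond_star 2 d -> permissible 2 d /\ regular_degree_seq 2 d.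
  move=> /cond_starP star; have [d' d'd /andP []] := covered_family (starb_perm 2)
    (fun s => starb_red12 s (isT : 2 <= 4)) small_star2 size_d d_gt0 star.
  rewrite daggerb_red12 // family2_red12 (daggerb_perm 2 d'd) => /cond_daggerP dagger fam'.
  by split; [split=> //; apply/cond_starP | apply: regular_of_covered regular_family2 fam'].
split; split.
- by move=> reg; apply: (star_regular (regular_star (isT : 2 <= 3) size_d reg)).1.
- by case=> star _; apply: (star_regular star).2.
- by case.
- by move/star_regular => [].
Qed.

Lemma regular3P d : size d = 3 -> all (fun x => 0 < x) d ->
  regular_degree_seq 3 d <-> permissible 3 d.
Proof.
move=> size_d d_gt0; split=> [reg | /permissibleP perm].
  by split; [apply: regular_star reg | apply: regular3_dagger].
have [d' d'd fam'] := covered_family (permissibleb_perm 3)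
  (fun s => permissibleb_red12 s (isT : 3 <= 4)) small_permissible3 size_d d_gt0 perm.
by rewrite family3_red12 in fam'; apply: regular_of_covered regular_family3 fam'.
Qed.

Lemma exceptional4_red12 d' d : perm_eq d' d -> all (fun x => 0 < x) d' ->
  exceptional12 (map red12 d') -> exceptional4 d.
Proof.
move=> d'd d'_gt0; rewrite /exceptional12 !inE.
have e12 x : red12 x = 12 -> 12 %| x by move=> x_red; rewrite -(dvdn_red12 _ (dvdnn 12)) x_red.
case/or3P => /eqP d'_red; case: d' d'_red d'd d'_gt0 => [|a [|b [|c [|e [|? ?]]]]] // [];
  move=> /eqP + /eqP + /eqP + /e12 /dvdnP [k e_k] d'd /= /and5P [_ _ _ e_gt0 _];
  rewrite !red12_eq // => /eqP a_eq /eqP b_eq /eqP c_eq;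
  exists k; (split; first lia);
  rewrite perm_sym e_k mulnC a_eq b_eq c_eq in d'd; tauto.
Qed.

Lemma regular4_permissible d : size d = 4 -> all (fun x => 0 < x) d ->
  permissible 4 d -> ~ exceptional4 d -> regular_degree_seq 4 d.
Proof.
move=> size_d d_gt0 /permissibleP perm not_exc.
have [d' d'd /orP [exc' | fam']] := covered_family (permissibleb_perm 4)
  (fun s => permissibleb_red12 s (isT : 4 <= 4)) small_permissible4 size_d d_gt0 perm.
  by case: not_exc; apply: (exceptional4_red12 d'd _ exc'); rewrite (perm_all _ d'd).
by rewrite family4_red12 in fam'; apply: regular_of_covered regular_family4 fam'.
Qed.

Lemma exceptional4_not_regular d : size d = 4 -> exceptional4 d -> ~ regular_degree_seq 4 d.
Proof.
move=> size_d [delta [delta_gt0 d_exc]] reg.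
have [x x125 d_x] : exists2 x, x \in [:: 1; 2; 5] & perm_eq d [:: x; 2; 5; 12 * delta].
  by case: d_exc => [d_x | [d_x | d_x]]; [exists 1 | exists 2 | exists 5].
have e_gt0 : 0 < 12 * delta by rewrite muln_gt0.
exact: (not_regular4_exceptional x125 e_gt0 (regular_degree_seq_perm d_x size_d reg)).
Qed.

Theorem theorem2p5 :
  (* (1) n = 2 *)
  (forall d : seq nat, size d = 2 -> all (fun x => 0 < x) d ->
     (regular_degree_seq 2 d <-> permissible 2 d) /\
     (permissible 2 d <-> cond_star 2 d)) /\
  (* (2) n = 3 *)
  (forall d : seq nat, size d = 3 -> all (fun x => 0 < x) d ->
     (regular_degree_seq 3 d <-> permissible 3 d)) /\
  (* (3) n = 4 *)
  (forall d : seq nat, size d = 4 -> all (fun x => 0 < x) d ->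
     (permissible 4 d -> ~ exceptional4 d -> regular_degree_seq 4 d) /\
     (exceptional4 d -> ~ regular_degree_seq 4 d)).
Proof.
split; [exact: regular2P | split; first exact: regular3P].
move=> d size_d d_gt0; split; first exact: regular4_permissible.
exact: exceptional4_not_regular.
Qed.
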